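(* For all $P,Q\in\Gamma_n$, $$D_{f_8}(P\|Q)\le \tfrac13 D_{f_1}(P\|Q)\le \tfrac14 D_{f_3}(P\|Q)\le \tfrac13 D_{f_2}(P\|Q)\le D_{f_6}(P\|Q).$$ Equivalently, $$\tfrac14\Delta-\tfrac13 M_{SH}\le \tfrac13\big(h-\tfrac12 M_{SG}\big)\le \tfrac14\big(h-\tfrac13 M_{SH}\big)\le\tfrac13\big(h-\tfrac14\Delta\big)\le \tfrac12 M_{SG}-\tfrac13 M_{SH},$$ all measures evaluated at $(P\|Q)$.
   Context: $\Gamma_n=\{P=(p_1,\dots,p_n): p_i>0,\ \sum_i p_i=1\}$, $n\ge2$. For $f:(0,\infty)\to\mathbb{R}$, $D_f(P\|Q)=\sum_{i=1}^n q_i f(p_i/q_i)$. For $x>0$ let $A=\frac{x+1}{2}$, $G=\sqrt x$, $H=\frac{2x}{x+1}$, $S=\sqrt{\frac{x^2+1}{2}}$ (means of $x$ and $1$), and define $f_1(x)=A-\frac{G+S}{2}$, $f_2(x)=\frac{A+H}{2}-G$, $f_3(x)=\frac13\big[3A+H-S-3G\big]$, $f_6(x)=\frac16\big[S+2H-3G\big]$, $f_8(x)=\frac16\big[3A-2S-H\big]$. The measures: $M_{SG}=\sum_i\big(\sqrt{(p_i^2+q_i^2)/2}-\sqrt{p_iq_i}\big)$, $M_{SH}=\sum_i\big(\sqrt{(p_i^2+q_i^2)/2}-\frac{2p_iq_i}{p_i+q_i}\big)$, $h=\frac12\sum_i(\sqrt{p_i}-\sqrt{q_i})^2$, $\Delta=\sum_i\frac{(p_i-q_i)^2}{p_i+q_i}$.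 *)

From Stdlib Require Import Reals Lra.
Open Scope R_scope.

Fixpoint rsum (n : nat) (f : nat -> R) : R :=
  match n with
  | O => 0
  | S m => rsum m f + f m
  end.

Definition Gamma (n : nat) (P : nat -> R) : Prop :=
  (forall i, (i < n)%nat -> 0 < P i) /\ rsum n P = 1.

Definition Df (f : R -> R) (n : nat) (P Q : nat -> R) : R :=
  rsum n (fun i => Q i * f (P i / Q i)).

(* means of x and 1 *)
Definition Am (x : R) : R := (x + 1) / 2.
Definition Gm (x : R) : R := sqrt x.
Definition Hm (x : R) : R := 2 * x / (x + 1).
Definition Sm (x : R) : R := sqrt ((x ^ 2 + 1) / 2).

Definition f1 (x : R) : R := Am x - (Gm x + Sm x) / 2.
Definition f2 (x : R) : R := (Am x + Hm x) / 2 - Gm x.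
Definition f3 (x : R) : R := / 3 * (3 * Am x + Hm x - Sm x - 3 * Gm x).
Definition f6 (x : R) : R := / 6 * (Sm x + 2 * Hm x - 3 * Gm x).
Definition f8 (x : R) : R := / 6 * (3 * Am x - 2 * Sm x - Hm x).

(* All four inequalities are, after clearing the constants, the single
   pointwise inequality A + G <= S + H between means of x and 1; since a
   Csiszar divergence is a positively weighted sum of values of f, the
   pointwise inequalities add up.  With t = sqrt x the mean inequality reads
   L(t) <= sqrt ((t^4 + 1) / 2) for a rational L(t), and the gap between the
   squares is (t - 1)^6 (t + 1)^2 / (4 (t^2 + 1)^2). *)

From Stdlib Require Import Reals Lra Psatz.
Open Scope R_scope.

Lemma Rle_sqrt_of_sqr (a b : R) : a ^ 2 <= b -> a <= sqrt b.
Proof.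
  intros Hab.
  apply Rle_trans with (Rabs a); [apply Rle_abs|].
  rewrite <- sqrt_Rsqr_abs. apply sqrt_le_1_alt.
  unfold Rsqr. lra.
Qed.

Lemma mean_ineq_sqrt (t : R) : 0 < t ->
  (t ^ 2 + 1) / 2 + t <= sqrt ((t ^ 4 + 1) / 2) + 2 * t ^ 2 / (t ^ 2 + 1).
Proof.
  intros Ht.
  assert (Ht2 : 0 < t ^ 2 + 1) by nra.
  set (L := (t ^ 2 + 1) / 2 + t - 2 * t ^ 2 / (t ^ 2 + 1)).
  assert (Hgap : (t ^ 4 + 1) / 2 - L ^ 2
                 = ((t - 1) ^ 3 * (t + 1)) ^ 2 / (2 * (t ^ 2 + 1)) ^ 2).
  { unfold L. field. lra. }
  assert (Hsq : L ^ 2 <= (t ^ 4 + 1) / 2).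
  { assert (0 <= ((t - 1) ^ 3 * (t + 1)) ^ 2 / (2 * (t ^ 2 + 1)) ^ 2).
    { unfold Rdiv; apply Rmult_le_pos; [apply pow2_ge_0|].
      apply Rlt_le, Rinv_0_lt_compat; nra. }
    lra. }
  pose proof (Rle_sqrt_of_sqr L _ Hsq). unfold L in *. lra.
Qed.

Lemma mean_ineq (x : R) : 0 < x -> Am x + Gm x <= Sm x + Hm x.
Proof.
  intros Hx. unfold Am, Gm, Sm, Hm.
  assert (Hxt : x = sqrt x ^ 2) by (simpl; rewrite Rmult_1_r, sqrt_sqrt; lra).
  pose proof (mean_ineq_sqrt (sqrt x) (sqrt_lt_R0 x Hx)) as H.
  replace (sqrt x ^ 4) with ((sqrt x ^ 2) ^ 2) in H by ring.
  rewrite <- Hxt in H. lra.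
Qed.

Lemma rsum_le_compat (n : nat) (f g : nat -> R) :
  (forall i, (i < n)%nat -> f i <= g i) -> rsum n f <= rsum n g.
Proof.
  induction n as [|n IH]; simpl; intros H; [lra|].
  assert (rsum n f <= rsum n g) by (apply IH; intros; apply H; lia).
  specialize (H n ltac:(lia)). lra.
Qed.

Lemma rsum_mult_l (n : nat) (c : R) (f : nat -> R) :
  c * rsum n f = rsum n (fun i => c * f i).
Proof. induction n as [|n IH]; simpl; [ring|]. rewrite <- IH. ring. Qed.

Lemma Df_mult_le (n : nat) (P Q : nat -> R) (a b : R) (g h : R -> R) :
  (forall i, (i < n)%nat -> 0 < P i) -> (forall i, (i < n)%nat -> 0 < Q i) ->
  (forall x, 0 < x -> a * g x <= b * h x) ->
  a * Df g n P Q <= b * Df h n P Q.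
Proof.
  intros HP HQ Hgh. unfold Df. rewrite !rsum_mult_l.
  apply rsum_le_compat. intros i Hi.
  specialize (Hgh (P i / Q i) (Rdiv_lt_0_compat _ _ (HP i Hi) (HQ i Hi))).
  specialize (HQ i Hi). nra.
Qed.

Theorem theorem7p1 (n : nat) (P Q : nat -> R) :
  (2 <= n)%nat -> Gamma n P -> Gamma n Q ->
  Df f8 n P Q <= / 3 * Df f1 n P Q /\
  / 3 * Df f1 n P Q <= / 4 * Df f3 n P Q /\
  / 4 * Df f3 n P Q <= / 3 * Df f2 n P Q /\
  / 3 * Df f2 n P Q <= Df f6 n P Q.
Proof.
  intros _ [HP _] [HQ _].
  rewrite <- (Rmult_1_l (Df f8 n P Q)), <- (Rmult_1_l (Df f6 n P Q)).
  repeat split; apply Df_mult_le; try assumption;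
    intros x Hx; pose proof (mean_ineq x Hx);
    unfold f1, f2, f3, f6, f8; lra.
Qed.
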